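(* Let $n>k$ and let $\mathcal{S}$ be a set of $k$-spaces in $\mathrm{AG}(n,q)$ pairwise intersecting in a $(k-1)$-space such that $\mathcal{S}$ is not a $(k-1)$-pencil. Then $|\mathcal{S}|\leq\theta_k$, and equality holds if and only if there exist an affine $(k+1)$-space $\Gamma$ and $\mathcal{S}$ is a maximal set of $\theta_k$ affine $k$-spaces in $\Gamma$ such that $\tilde\sigma_1\cap H_\infty\neq\tilde\sigma_2\cap H_\infty$ for all distinct $\sigma_1,\sigma_2\in\mathcal{S}$. Moreover, all elements of $\mathcal{S}$ are contained in an affine $(k+1)$-space.
   Context: $\mathrm{AG}(n,q)$ is viewed as $\mathrm{PG}(n,q)$ minus a hyperplane $H_\infty$; for an affine subspace $\alpha$, $\tilde\alpha$ denotes its projective closure. Affine subspaces intersect in a $(k-1)$-space if their affine intersection is an affine $(k-1)$-space. $\theta_k=\frac{q^{k+1}-1}{q-1}$. A $(k-1)$-pencil is the set of all affine $k$-spaces containing a fixed affine $(k-1)$-space. *)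

(* AG(n,q) modelled as the vector space 'rV[F]_n over a
   finite field F with q = #|F| elements. *)
From HB Require Import structures.
From mathcomp Require Import all_boot all_order all_algebra.
Set Implicit Arguments. Unset Strict Implicit. Unset Printing Implicit Defensive.
Import GRing.Theory.
Local Open Scope ring_scope.

Section AffGeom.
Variables (F : finFieldType) (n : nat).
Local Notation pt := 'rV[F]_n.

(* A is an affine k-space: a coset v + U of a k-dimensional subspace U
   (U given as the row space of a square matrix). *)
Definition is_aff (k : nat) (A : {set pt}) : Prop :=
  exists (v : pt) (U : 'M[F]_n),
    \rank U = k /\ A = [set x : pt | (x - v <= U)%MS].

(* The points at infinity of an affine subspace A, i.e. the points of
   the projective closure of A lying in H_infty: the directions
   (1-dimensional subspaces, in canonical form <<_>>) of lines of A. *)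
Definition inf_part (A : {set pt}) : {set 'M[F]_n} :=
  [set (<<x - y>>)%MS | x in A, y in A & x != y].

Definition in_pencil (k : nat) (S : {set {set pt}}) : Prop :=
  exists P : {set pt}, is_aff k.-1 P /\ forall s, s \in S -> P \subset s.

Definition pairwise_meet (k : nat) (S : {set {set pt}}) : Prop :=
  forall s1 s2, s1 \in S -> s2 \in S -> s1 != s2 -> is_aff k.-1 (s1 :&: s2).

Definition max_distinct_inf (k : nat) (Gam : {set pt}) (S : {set {set pt}}) : Prop :=
  [/\ forall s, s \in S -> is_aff k s /\ s \subset Gam,
      forall s1 s2, s1 \in S -> s2 \in S -> s1 != s2 -> inf_part s1 != inf_part s2
    & forall t, is_aff k t -> t \subset Gam -> t \notin S ->
        exists2 s, s \in S & inf_part s = inf_part t].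
End AffGeom.

Definition theta (q k : nat) : nat := ((q ^ k.+1 - 1) %/ (q - 1))%N.

From mathcomp Require Import all_boot all_order all_algebra.
Set Implicit Arguments. Unset Strict Implicit. Unset Printing Implicit Defensive.
Import GRing.Theory.
Local Open Scope ring_scope.

(* Two distinct members s1 = w + U1 and s2 = w + U2 of S meet in the (k-1)-flat
   w + U1 :&: U2 and span the (k+1)-flat Gam = w + (U1 + U2).  A third member
   meeting both in (k-1)-flats either lies in Gam or contains s1 :&: s2.  If some
   member s3 leaves Gam, it contains s1 :&: s2, and every member inside Gam meets
   s3 inside s3 :&: Gam = s1 :&: s2; so every member contains s1 :&: s2 and S is a
   pencil.  Hence S lies in Gam.  Two members of S meet, so equal parts at
   infinity would make them equal: S embeds into the parts at infinity of the
   hyperplanes of Gam, i.e. into the k-subspaces of a (k+1)-space, and these are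
   as many as its lines (by orthogonality), namely theta_k.  Equality means every
   part at infinity is hit, which is the maximality condition. *)

Section Subspaces.
Variable F : finFieldType.

Lemma submx_rank_geq m1 m2 n (A : 'M[F]_(m1, n)) (B : 'M[F]_(m2, n)) :
  (A <= B)%MS -> (\rank B <= \rank A)%N -> (B <= A)%MS.
Proof. by move=> sAB leBA; rewrite -(mxrank_leqif_sup sAB).2 eqn_leq leBA mxrankS. Qed.

Lemma exists_submx_rank n (U : 'M[F]_n) j : (j <= \rank U)%N ->
  exists2 D : 'M[F]_n, (D <= U)%MS & \rank D = j.
Proof.
move=> leju; exists <<(pid_mx j : 'M_(j, \rank U)) *m row_base U>>%MS.
  by rewrite genmxE (submx_trans (submxMl _ _)) ?eq_row_base.
by rewrite mxrank_gen mxrankMfree ?row_base_free // rank_pid_mx.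
Qed.

Definition subspaces r j := [set <<V>>%MS | V : 'M[F]_r & \rank V == j].

Definition subspaces_of n (G : 'M[F]_n) j :=
  [set <<U>>%MS | U : 'M[F]_n & (U <= G)%MS && (\rank U == j)].

Lemma mem_subspaces_gen r j W : W \in subspaces r j -> <<W>>%MS = W.
Proof. by case/imsetP=> V _ ->; rewrite genmx_id. Qed.

Lemma card_line_generators r (v0 : 'rV[F]_r) : v0 != 0 ->
  #|[set v : 'rV[F]_r | (v != 0) && (<<v>>%MS == <<v0>>%MS)]| = (#|F| - 1)%N.
Proof.
move=> nz_v0.
have -> : [set v : 'rV[F]_r | (v != 0) && (<<v>>%MS == <<v0>>%MS)] =
          [set a *: v0 | a in [set~ (0 : F)]].
  apply/setP=> v; rewrite inE; apply/andP/imsetP => [[nz_v /eqP/genmxP/andP[+ _]]|].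
    case/sub_rVP=> a def_v; exists a => //; rewrite !inE.
    by apply: contra nz_v => /eqP a0; rewrite def_v a0 scale0r.
  case=> a; rewrite !inE => nz_a ->; split; first by rewrite scaler_eq0 negb_or nz_a.
  exact/eqP/genmxP/eqmxP/eqmx_scale.
rewrite card_in_imset ?cardsC1 ?subn1 // => a b _ _ /eqP.
by rewrite -subr_eq0 -scalerBl scaler_eq0 (negbTE nz_v0) orbF subr_eq0 => /eqP.
Qed.

Lemma lines_genmx_nz r : subspaces r 1 = [set <<v>>%MS | v : 'rV[F]_r in [set~ 0]].
Proof.
apply/setP=> l; apply/imsetP/imsetP => [[V]|[v]].
  rewrite inE => /eqP rV1 ->; exists (nz_row V).
    by rewrite !inE nz_row_eq0 -mxrank_eq0 rV1.
  apply/esym/genmxP; rewrite -(mxrank_leqif_eq (nz_row_sub V)).2 rV1 rank_rV.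
  by rewrite nz_row_eq0 -mxrank_eq0 rV1.
by rewrite !inE => nz_v ->; exists <<v>>%MS; rewrite ?genmx_id // inE mxrank_gen rank_rV nz_v.
Qed.

Lemma card_lines r : (#|subspaces r 1| * (#|F| - 1) = #|F| ^ r - 1)%N.
Proof.
rewrite lines_genmx_nz -sum_nat_const.
have -> : (#|F| ^ r - 1)%N = #|[set~ (0 : 'rV[F]_r)]|.
  by rewrite cardsC1 card_mx mul1n subn1.
rewrite -sum1_card (partition_big_imset (fun v : 'rV[F]_r => <<v>>%MS)) /=.
apply: eq_bigr => l /imsetP[v0]; rewrite !inE => nz_v0 ->.
rewrite sum1_card -(card_line_generators nz_v0); apply: eq_card => v.
by rewrite inE -topredE /= !inE.
Qed.

(* Orthogonal complement for the standard bilinear form; over a finite field it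
   may meet V, but the ranks of V and perp V still add up to r. *)
Definition perp r (V : 'M[F]_r) : 'M[F]_r := <<kermx V^T>>%MS.

Lemma rank_perp r (V : 'M[F]_r) : \rank (perp V) = (r - \rank V)%N.
Proof. by rewrite mxrank_gen mxrank_ker mxrank_tr. Qed.

Lemma perpK r (V : 'M[F]_r) : perp (perp V) = <<V>>%MS.
Proof.
have sVpp : (V <= perp (perp V))%MS.
  have /eqP perpV0 : (perp V *m V^T == 0) by rewrite -sub_kermx genmxE.
  by rewrite genmxE sub_kermx -[V in V *m _]trmxK -trmx_mul perpV0 trmx0.
have -> : perp (perp V) = <<perp (perp V)>>%MS by rewrite /perp genmx_id.
apply/esym/genmxP.
rewrite -(mxrank_leqif_eq sVpp).2 !rank_perp subKn ?rank_leq_col //.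
Qed.

Lemma card_subspaces_perp_le r j : (#|subspaces r j| <= #|subspaces r (r - j)|)%N.
Proof.
rewrite -(card_in_imset (f := @perp r)) ?subset_leq_card //.
  apply/subsetP=> _ /imsetP[_ /imsetP[V + ->] ->]; rewrite inE => /eqP rV.
  by apply/imsetP; exists (perp <<V>>%MS); rewrite ?genmx_id // inE rank_perp mxrank_gen rV.
move=> W1 W2 /mem_subspaces_gen W1g /mem_subspaces_gen W2g eqW.
by rewrite -W1g -W2g -!perpK eqW.
Qed.

Lemma card_subspaces_perp r j : (j <= r)%N -> #|subspaces r j| = #|subspaces r (r - j)|%N.
Proof.
move=> lejr; apply/eqP; rewrite eqn_leq card_subspaces_perp_le /=.
by rewrite -{2}(subKn lejr) card_subspaces_perp_le.
Qed.

Lemma subspaces_of_coord n (G : 'M[F]_n) j :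
  subspaces_of G j = [set <<V *m row_base G>>%MS | V in subspaces (\rank G) j].
Proof.
have sBG : (row_base G :=: G)%MS := eq_row_base G.
apply/setP=> W; apply/imsetP/imsetP => [[U]|[_ /imsetP[V + ->] ->]].
  rewrite inE => /andP[sUG /eqP rU] ->.
  have sUB : (U <= row_base G)%MS by rewrite sBG.
  exists <<U *m pinvmx (row_base G)>>%MS.
    apply/imsetP; exists <<U *m pinvmx (row_base G)>>%MS; rewrite ?genmx_id //.
    by rewrite inE mxrank_gen -rU -{2}(mulmxKpV sUB) mxrankMfree ?row_base_free.
  apply/genmxP/eqmxP/eqmx_sym; apply: eqmx_trans (eqmxMr _ (genmxE _)) _.
  by rewrite mulmxKpV.
rewrite inE => /eqP rV; exists <<<<V>>%MS *m row_base G>>%MS; last by rewrite genmx_id.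
by rewrite inE genmxE -sBG submxMl mxrank_gen mxrankMfree ?row_base_free // mxrank_gen rV /=.
Qed.

Lemma card_subspaces_of n (G : 'M[F]_n) j :
  #|subspaces_of G j| = #|subspaces (\rank G) j|.
Proof.
rewrite subspaces_of_coord card_in_imset // => W1 W2 W1g W2g /genmxP/andP[s12 s21].
rewrite -(mem_subspaces_gen W1g) -(mem_subspaces_gen W2g); apply/genmxP/andP.
by rewrite -!(submxMfree _ _ (row_base_free G)).
Qed.

Lemma card_hyperplanes_of n (G : 'M[F]_n) k :
  \rank G = k.+1 -> #|subspaces_of G k| = theta #|F| k.
Proof.
move=> rG; rewrite card_subspaces_of rG card_subspaces_perp // subSnn.
by rewrite /theta -card_lines mulnK // subn_gt0 card_finNzRing_gt1.
Qed.

End Subspaces.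

Section AffineSpaces.
Variables (F : finFieldType) (n : nat).
Local Notation pt := 'rV[F]_n.

Lemma submxB m p (A B : 'M[F]_(m, n)) (C : 'M[F]_(p, n)) :
  (A <= C)%MS -> (B <= C)%MS -> (A - B <= C)%MS.
Proof. by move=> sAC sBC; apply: addmx_sub; rewrite ?eqmx_opp. Qed.

Lemma submxDr m p (A B : 'M[F]_(m, n)) (C : 'M[F]_(p, n)) :
  (B <= C)%MS -> ((A + B)%R <= C)%MS = (A <= C)%MS.
Proof.
move=> sBC; apply/idP/idP => [sABC|sAC]; last exact: addmx_sub sAC sBC.
by rewrite -(addrK B A) submxB.
Qed.

Definition aff (v : pt) (U : 'M[F]_n) : {set pt} := [set x : pt | (x - v <= U)%MS].

Lemma mem_aff v U x : (x \in aff v U) = (x - v <= U)%MS.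
Proof. by rewrite inE. Qed.

Lemma is_affE k (A : {set pt}) : is_aff k A -> exists v U, \rank U = k /\ A = aff v U.
Proof. by []. Qed.

Lemma is_aff_aff k v (U : 'M[F]_n) : \rank U = k -> is_aff k (aff v U).
Proof. by exists v, U. Qed.

Lemma aff_base v U : v \in aff v U.
Proof. by rewrite mem_aff subrr sub0mx. Qed.

Lemma aff_rebase v U w : w \in aff v U -> aff v U = aff w U.
Proof.
rewrite mem_aff => sw; apply/setP=> x; rewrite !mem_aff.
have -> : x - v = (x - w) + (w - v) by rewrite addrA subrK.
by rewrite submxDr.
Qed.

Lemma aff_subsetP v U w U' :
  reflect ((U <= U')%MS /\ v \in aff w U') (aff v U \subset aff w U').
Proof.
apply: (iffP subsetP) => [sub|[sUU' vw] x]; last first.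
  by rewrite (aff_rebase vw) !mem_aff => /submx_trans->.
have vw := sub _ (aff_base v U); split=> //; apply/row_subP=> i.
have /sub : v + row i U \in aff v U by rewrite mem_aff addrC addKr row_sub.
by rewrite (aff_rebase vw) mem_aff addrC addKr.
Qed.

Lemma eq_aff v U U' : (U == U')%MS -> aff v U = aff v U'.
Proof. by move=> /eqmxP eqU; apply/setP=> x; rewrite !mem_aff eqU. Qed.

Lemma aff_eq_dir v U w U' : aff v U = aff w U' -> (U == U')%MS.
Proof.
move=> eqA; have /aff_subsetP[-> _] : aff v U \subset aff w U' by rewrite eqA.
by have /aff_subsetP[] : aff w U' \subset aff v U by rewrite eqA.
Qed.

Lemma setI_aff v U U' : aff v U :&: aff v U' = aff v (U :&: U')%MS.
Proof. by apply/setP=> x; rewrite !inE sub_capmx. Qed.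

Lemma is_aff_setI_aff j v (U : 'M[F]_n) v' U' :
  is_aff j (aff v U :&: aff v' U') ->
  exists c, [/\ c \in aff v U, c \in aff v' U' & \rank (U :&: U')%MS = j].
Proof.
case/is_affE=> c [E [rE eqI]].
have /setIP[cA cA'] : c \in aff v U :&: aff v' U' by rewrite eqI aff_base.
have eqD : (U :&: U' == E)%MS.
  by apply: (@aff_eq_dir c _ c); rewrite -setI_aff -(aff_rebase cA) -(aff_rebase cA').
by exists c; split=> //; rewrite -rE; apply: eqmx_rank.
Qed.

Lemma mem_inf_part v U X :
  reflect (exists2 u : pt, (u <= U)%MS & u != 0 /\ X = <<u>>%MS) (X \in inf_part (aff v U)).
Proof.
apply: (iffP imset2P) => [[x y xA]|[u sU [nz_u ->]]].
  rewrite inE => /andP[yA neq_xy] ->; exists (x - y); last by rewrite subr_eq0.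
  have -> : x - y = (x - v) - (y - v) by rewrite opprB addrA subrK.
  by apply: submxB; rewrite -mem_aff.
have uvA : v + u \in aff v U by rewrite mem_aff addrC addKr.
exists (v + u) v => //; last by rewrite addrC addKr.
by rewrite inE aff_base -subr_eq0 addrC addKr.
Qed.

Lemma inf_part_sub v U w U' :
  inf_part (aff v U) \subset inf_part (aff w U') -> (U <= U')%MS.
Proof.
move/subsetP=> sub; apply/row_subP=> i.
have [->|nz_i] := eqVneq (row i U) 0; first exact: sub0mx.
have /sub/mem_inf_part[u sU' [_ /genmxP/andP[+ _]]] : <<row i U>>%MS \in inf_part (aff v U).
  by apply/mem_inf_part; exists (row i U); rewrite ?row_sub.
by move/submx_trans; apply.
Qed.

Lemma inf_part_affP v U w U' :
  reflect (inf_part (aff v U) = inf_part (aff w U')) (U == U')%MS.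
Proof.
apply: (iffP andP) => [[sUU' sU'U]|eqI].
  apply/setP=> X; apply/mem_inf_part/mem_inf_part => -[u su nz].
    by exists u; rewrite ?(submx_trans su).
  by exists u; rewrite ?(submx_trans su).
by split; [apply: (@inf_part_sub v _ w) | apply: (@inf_part_sub w _ v)]; rewrite eqI.
Qed.

End AffineSpaces.

Section Flats.
Variables (F : finFieldType) (n : nat).
Local Notation pt := 'rV[F]_n.

Lemma rank_adds_meet k (U1 U2 : 'M[F]_n) : (0 < k)%N ->
  \rank U1 = k -> \rank U2 = k -> \rank (U1 :&: U2)%MS = k.-1 -> \rank (U1 + U2)%MS = k.+1.
Proof.
move=> k_gt0 rU1 rU2 rD; have := mxrank_sum_cap U1 U2.
rewrite rU1 rU2 rD -{3}(prednK k_gt0) addnS -addSn => /eqP.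
by rewrite eqn_add2r => /eqP.
Qed.

(* X, spanned by the directions of the two meets and by a vector joining them,
   lies in U3 :&: (U1 + U2): either it is all of U3, or it is the direction of
   both meets, which then equals U1 :&: U2. *)
Lemma contains_meet_or_sub_join k w (U1 U2 U3 : 'M[F]_n) v3 :
  (0 < k)%N -> \rank (U1 :&: U2)%MS = k.-1 -> \rank U3 = k ->
  is_aff k.-1 (aff v3 U3 :&: aff w U1) -> is_aff k.-1 (aff v3 U3 :&: aff w U2) ->
  aff w (U1 :&: U2)%MS \subset aff v3 U3 \/ aff v3 U3 \subset aff w (U1 + U2)%MS.
Proof.
move=> k_gt0 rD rU3 /is_aff_setI_aff[a [a3 a1 rA]] /is_aff_setI_aff[b [b3 b2 rB]].
set DA := (U3 :&: U1)%MS in rA; set DB := (U3 :&: U2)%MS in rB.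
set G := (U1 + U2)%MS; set X := (DA + DB + (a - b))%MS.
move: (a3) (a1) (b3) (b2); rewrite !mem_aff => sa3 sa1 sb3 sb2.
have sab3 : (a - b <= U3)%MS.
  by have := submxB sa3 sb3; rewrite opprB addrA subrK.
have sabG : (a - b <= G)%MS.
  have := submxB (submx_trans sa1 (addsmxSl U1 U2)) (submx_trans sb2 (addsmxSr U1 U2)).
  by rewrite opprB addrA subrK.
have sDAX : (DA <= X)%MS by rewrite /X -addsmxA addsmxSl.
have sDBX : (DB <= X)%MS by rewrite /X (submx_trans (addsmxSr DA DB)) ?addsmxSl.
have sXU3 : (X <= U3)%MS by rewrite /X !addsmx_sub sab3 !capmxSl.
have sXG : (X <= G)%MS.
  rewrite /X !addsmx_sub sabG andbT.
  rewrite (submx_trans (capmxSr _ _) (addsmxSl _ _)) //.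
  exact: submx_trans (capmxSr _ _) (addsmxSr _ _).
have [rX|rX] := leqP k (\rank X).
  right; rewrite (aff_rebase a3); apply/aff_subsetP; split.
    by rewrite (submx_trans _ sXG) // submx_rank_geq // rU3.
  by rewrite mem_aff (submx_trans sa1) ?addsmxSl.
left.
have sXDA : (X <= DA)%MS by rewrite submx_rank_geq // rA -ltnS prednK.
have sDADB : (DA <= DB)%MS by rewrite submx_rank_geq ?rA ?rB // (submx_trans sDBX).
have sDAD : (DA <= U1 :&: U2)%MS by rewrite sub_capmx capmxSr (submx_trans sDADB) ?capmxSr.
have sDDA : (U1 :&: U2 <= DA)%MS by rewrite submx_rank_geq ?rA ?rD.
have aD : a \in aff w (U1 :&: U2)%MS.
  rewrite mem_aff sub_capmx sa1 /=.
  have -> : a - w = (a - b) + (b - w) by rewrite addrA subrK.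
  rewrite submxDr //; apply: submx_trans (capmxSr U1 U2).
  exact: submx_trans (addsmxSr _ _) (submx_trans sXDA sDAD).
rewrite (aff_rebase a3) (aff_rebase aD); apply/aff_subsetP; split; last exact: aff_base.
exact: submx_trans sDDA (capmxSl _ _).
Qed.

(* aff v3 U3 meets aff w G exactly in aff w D, since U3 :&: G has rank < k and contains D. *)
Lemma meet_inside_contains k w (D G U3 : 'M[F]_n) v3 (s4 : {set pt}) :
  (0 < k)%N -> (D <= G)%MS -> \rank D = k.-1 -> \rank U3 = k ->
  aff w D \subset aff v3 U3 -> ~~ (aff v3 U3 \subset aff w G) ->
  s4 \subset aff w G -> is_aff k.-1 (aff v3 U3 :&: s4) -> aff w D \subset s4.
Proof.
move=> k_gt0 sDG rD rU3 /aff_subsetP[sDU3 w3]; rewrite (aff_rebase w3) => not_sub s4G.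
case/is_affE=> c [E [rE eqI]].
have nsU3G : ~~ (U3 <= G)%MS.
  by apply: contra not_sub => sU3G; apply/aff_subsetP; rewrite sU3G aff_base.
have sYD : (U3 :&: G <= D)%MS.
  have rY : (\rank (U3 :&: G) < k)%N.
    rewrite ltnNge; apply: contra nsU3G => rY.
    by rewrite (submx_trans _ (capmxSr U3 G)) // submx_rank_geq ?capmxSl ?rU3.
  by rewrite submx_rank_geq ?sub_capmx ?sDU3 // rD -ltnS prednK.
have /aff_subsetP[sEY cY] : aff c E \subset aff w (U3 :&: G)%MS.
  by rewrite -setI_aff -eqI setISS.
have sDE : (D <= E)%MS by rewrite submx_rank_geq ?rD ?rE // (submx_trans sEY).
have cD : c \in aff w D by move: cY; rewrite !mem_aff => /submx_trans->.
rewrite (aff_rebase cD); apply: subset_trans (subsetIr (aff w U3) s4).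
by rewrite eqI; apply/aff_subsetP; rewrite sDE aff_base.
Qed.

Lemma not_pencil_two_members k (S : {set {set pt}}) : (k <= n)%N ->
  (forall s, s \in S -> is_aff k s) -> ~ in_pencil k S ->
  exists s1 s2, [/\ s1 \in S, s2 \in S & s1 != s2].
Proof.
move=> le_kn S_flats not_pencil.
have [S0|[s sS]] := set_0Vmem S.
  have [D _ rD] : exists2 D : 'M[F]_n, (D <= 1%:M)%MS & \rank D = k.-1.
    by apply: exists_submx_rank; rewrite mxrank1 (leq_trans (leq_pred k)).
  by case: not_pencil; exists (aff 0 D); split=> [|s]; [exact: is_aff_aff | rewrite S0 inE].
have [/exists_inP[s2 s2S ne]|] := boolP [exists s2 in S, s2 != s]; first by exists s2, s.
rewrite negb_exists_in => /forall_inP all_s.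
have [v [U [rU def_s]]] := is_affE (S_flats _ sS).
have [D sDU rD] : exists2 D : 'M[F]_n, (D <= U)%MS & \rank D = k.-1.
  by apply: exists_submx_rank; rewrite rU leq_pred.
case: not_pencil; exists (aff v D); split=> [|t tS]; first exact: is_aff_aff.
move/negPn/eqP: (all_s t tS) => ->; rewrite def_s.
by apply/aff_subsetP; rewrite sDU aff_base.
Qed.

Lemma pairwise_meet_sub_flat k (S : {set {set pt}}) : (0 < k)%N -> (k < n)%N ->
  (forall s, s \in S -> is_aff k s) -> pairwise_meet k S -> ~ in_pencil k S ->
  exists Gam : {set pt}, is_aff k.+1 Gam /\ forall s, s \in S -> s \subset Gam.
Proof.
move=> k_gt0 lt_kn S_flats meetS not_pencil.
have [s1 [s2 [s1S s2S ne12]]] := not_pencil_two_members (ltnW lt_kn) S_flats not_pencil.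
have [v1 [U1 [rU1 def_s1]]] := is_affE (S_flats _ s1S).
have [v2 [U2 [rU2 def_s2]]] := is_affE (S_flats _ s2S).
have := meetS _ _ s1S s2S ne12; rewrite def_s1 def_s2 => /is_aff_setI_aff[w [w1 w2 rD]].
rewrite (aff_rebase w1) in def_s1; rewrite (aff_rebase w2) in def_s2.
set D := (U1 :&: U2)%MS in rD; set G := (U1 + U2)%MS.
exists (aff w G); split; first exact/is_aff_aff/rank_adds_meet.
have meet_or_sub s : s \in S -> aff w D \subset s \/ s \subset aff w G.
  move=> sS; have [v3 [U3 [rU3 def_s]]] := is_affE (S_flats _ sS); rewrite def_s in sS *.
  have [->|ne1] := eqVneq (aff v3 U3) s1.
    by right; rewrite def_s1; apply/aff_subsetP; rewrite addsmxSl aff_base.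
  have [->|ne2] := eqVneq (aff v3 U3) s2.
    by right; rewrite def_s2; apply/aff_subsetP; rewrite addsmxSr aff_base.
  apply: (contains_meet_or_sub_join k_gt0 rD rU3); rewrite -?def_s1 -?def_s2.
    exact: meetS _ _ sS s1S ne1.
  exact: meetS _ _ sS s2S ne2.
move=> s3 s3S; apply/negPn/negP => not_sub3.
have D3 : aff w D \subset s3.
  by case: (meet_or_sub _ s3S) => // sub3; rewrite sub3 in not_sub3.
have [v3 [U3 [rU3 def_s3]]] := is_affE (S_flats _ s3S).
case: not_pencil; exists (aff w D); split=> [|s4 s4S]; first exact: is_aff_aff.
have [//|sub4] := meet_or_sub _ s4S.
have ne34 : s3 != s4 by apply: contraNneq not_sub3 => ->.
apply: (@meet_inside_contains k w D G U3 v3) => //; rewrite -?def_s3 //.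
- exact: submx_trans (capmxSl _ _) (addsmxSl _ _).
- exact: meetS.
Qed.

End Flats.

Section PartsAtInfinity.
Variables (F : finFieldType) (n : nat).
Local Notation pt := 'rV[F]_n.

Definition inf_parts_of (G : 'M[F]_n) j : {set {set 'M[F]_n}} :=
  [set inf_part (aff (0 : pt) H) | H in subspaces_of G j].

Lemma card_inf_parts_of (G : 'M[F]_n) j : #|inf_parts_of G j| = #|subspaces_of G j|.
Proof.
apply: card_in_imset => _ _ /imsetP[U1 _ ->] /imsetP[U2 _ ->].
by move/inf_part_affP/genmxP; rewrite !genmx_id.
Qed.

Lemma inf_part_mem_inf_parts_of j g (G : 'M[F]_n) (s : {set pt}) :
  is_aff j s -> s \subset aff g G -> inf_part s \in inf_parts_of G j.
Proof.
move=> /is_affE[v [U [rU ->]]] /aff_subsetP[sUG _]; apply/imsetP; exists <<U>>%MS.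
  by apply/imsetP; exists U => //; rewrite inE sUG rU eqxx.
by apply/inf_part_affP/eqmxP/eqmx_sym/genmxE.
Qed.

Lemma mem_inf_parts_ofP j g (G : 'M[F]_n) X : X \in inf_parts_of G j ->
  exists2 t : {set pt}, is_aff j t /\ t \subset aff g G & X = inf_part t.
Proof.
case/imsetP=> _ /imsetP[U + ->] ->; rewrite inE => /andP[sUG /eqP rU].
exists (aff g <<U>>%MS); last exact/inf_part_affP/eqmxP/eqmx_refl.
split; first by apply: is_aff_aff; rewrite mxrank_gen.
by apply/aff_subsetP; rewrite genmxE sUG aff_base.
Qed.

Lemma pairwise_meet_inf_part_inj k (S : {set {set pt}}) :
  (forall s, s \in S -> is_aff k s) -> pairwise_meet k S ->
  {in S &, injective (@inf_part F n)}.
Proof.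
move=> S_flats meetS s1 s2 s1S s2S eq_inf; apply/eqP; apply: contraT => ne12.
have [v1 [U1 [_ def_s1]]] := is_affE (S_flats _ s1S).
have [v2 [U2 [_ def_s2]]] := is_affE (S_flats _ s2S).
have := meetS _ _ s1S s2S ne12; rewrite def_s1 def_s2 => /is_aff_setI_aff[c [c1 c2 _]].
move: eq_inf; rewrite def_s1 def_s2 => /inf_part_affP eqU.
by move: ne12; rewrite def_s1 def_s2 (aff_rebase c1) (aff_rebase c2) (eq_aff _ eqU) eqxx.
Qed.

Lemma card_inf_parts_of_hyperplanes k (G : 'M[F]_n) :
  \rank G = k.+1 -> #|inf_parts_of G k| = theta #|F| k.
Proof. by move=> rG; rewrite card_inf_parts_of card_hyperplanes_of. Qed.

Section FamilyInFlat.
Variables (k : nat) (g : pt) (G : 'M[F]_n) (S : {set {set pt}}).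
Hypotheses (rG : \rank G = k.+1)
  (S_flats : forall s, s \in S -> is_aff k s /\ s \subset aff g G)
  (inf_inj : {in S &, injective (@inf_part F n)}).

Lemma inf_parts_sub : [set inf_part s | s in S] \subset inf_parts_of G k.
Proof.
apply/subsetP=> _ /imsetP[s sS ->]; have [s_flat sG] := S_flats sS.
exact: inf_part_mem_inf_parts_of s_flat sG.
Qed.

Lemma card_family_le : (#|S| <= theta #|F| k)%N.
Proof.
rewrite -(card_in_imset inf_inj) -(card_inf_parts_of_hyperplanes rG).
exact: subset_leq_card inf_parts_sub.
Qed.

Lemma max_distinct_infP : max_distinct_inf k (aff g G) S <-> #|S| = theta #|F| k.
Proof.
rewrite -(card_in_imset inf_inj) -(card_inf_parts_of_hyperplanes rG); split.
  case=> _ _ maxS; suff -> : [set inf_part s | s in S] = inf_parts_of G k by [].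
  apply/eqP; rewrite eqEsubset inf_parts_sub /=.
  apply/subsetP=> X /(mem_inf_parts_ofP g)[t [t_flat tG] ->].
  have [tS|tNS] := boolP (t \in S); first exact: imset_f.
  by have [s sS <-] := maxS t t_flat tG tNS; apply: imset_f.
move=> card_eq; split.
- by move=> s /S_flats.
- by move=> s1 s2 s1S s2S; apply: contra => /eqP/(inf_inj s1S s2S)->.
move=> t t_flat tG _.
have /eqP/setP/(_ (inf_part t)) : [set inf_part s | s in S] == inf_parts_of G k.
  by rewrite eqEcard inf_parts_sub card_eq /=.
by rewrite (inf_part_mem_inf_parts_of t_flat tG) => /imsetP[s sS ->]; exists s.
Qed.
End FamilyInFlat.
End PartsAtInfinity.

Theorem mainTheorem2 (F : finFieldType) (n k : nat) (S : {set {set 'rV[F]_n}}) :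
  (0 < k)%N -> (k < n)%N ->
  (forall s, s \in S -> is_aff k s) ->
  pairwise_meet k S ->
  ~ in_pencil k S ->
  [/\ (#|S| <= theta #|F| k)%N,
      (#|S| = theta #|F| k) <->
        (exists Gam : {set 'rV[F]_n}, is_aff k.+1 Gam /\ max_distinct_inf k Gam S)
    & exists Gam : {set 'rV[F]_n}, is_aff k.+1 Gam /\ forall s, s \in S -> s \subset Gam].
Proof.
move=> k_gt0 lt_kn S_flats meetS not_pencil.
have inf_inj := pairwise_meet_inf_part_inj S_flats meetS.
have [Gam [Gam_flat sub_Gam]] := pairwise_meet_sub_flat k_gt0 lt_kn S_flats meetS not_pencil.
have [g [G [rG def_Gam]]] := is_affE Gam_flat.
have S_in_Gam s : s \in S -> is_aff k s /\ s \subset aff g G.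
  by move=> sS; rewrite -def_Gam; split; [apply: S_flats | apply: sub_Gam].
split; last by exists Gam.
  exact: card_family_le rG S_in_Gam inf_inj.
split=> [card_eq|[Gam' [Gam'_flat maxS]]].
  by exists Gam; split; rewrite // def_Gam; apply/(max_distinct_infP rG S_in_Gam inf_inj).
have [g' [G' [rG' def_Gam']]] := is_affE Gam'_flat; rewrite def_Gam' in maxS.
have [S_in_Gam' _ _] := maxS.
exact/(max_distinct_infP rG' S_in_Gam' inf_inj).
Qed.
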